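(* Let $\phi=(\phi_g,X_g,X)_{g\in G}$ be a partial action of a group $G$ on a set $X$ and let $H$ be a normal subgroup of $G$. Then there is an induced partial action $\overline{\phi}$ of $G/H$ on $X$ (with $X_{gH}=\bigcup_{k\in gH}X_k$ and $\overline{\phi}_{gH}(x)=\phi_k(x)$ for $k\in gH$, $x\in X_{k^{-1}}$) if and only if for every $h\in H$, $X_h=X_{h^{-1}}$ and $\phi_h=\operatorname{id}$.
   Context: A partial action of a group $G$ (identity $\varepsilon$) on a set $X$ is $\phi=(\phi_g,X_g,X)_{g\in G}$ with $X_g\subseteq X$ and bijections $\phi_g:X_{g^{-1}}\to X_g$ such that (i) $X_\varepsilon=X$ and $\phi_\varepsilon=\operatorname{id}_X$; (ii) $\phi_g(X_{g^{-1}}\cap X_h)=X_g\cap X_{gh}$ for all $g,h$; (iii) $\phi_g(\phi_h(x))=\phi_{gh}(x)$ for all $g,h$ and $x\in X_{h^{-1}}\cap X_{h^{-1}g^{-1}}$. *)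

Record group := Group {
  gcar :> Type;
  gmul : gcar -> gcar -> gcar;
  ginv : gcar -> gcar;
  gone : gcar;
  gmulA : forall a b c, gmul a (gmul b c) = gmul (gmul a b) c;
  gmul1g : forall a, gmul gone a = a;
  gmulVg : forall a, gmul (ginv a) a = gone
}.

Arguments gmul {g} _ _.
Arguments ginv {g} _.
Arguments gone {g}.

(* Partial action phi = (phi_g, X_g, X)_{g in G}: X_g is the predicate D g on X,
   phi_g is phi g (only meaningful on D (g^-1)). *)
Definition is_partial_action (G : group) (X : Type)
    (D : G -> X -> Prop) (phi : G -> X -> X) : Prop :=
  (forall x, D gone x) /\ (forall x, phi gone x = x) /\
  (forall g x, D (ginv g) x -> D g (phi g x)) /\
  (forall g x y, D (ginv g) x -> D (ginv g) y -> phi g x = phi g y -> x = y) /\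
  (forall g y, D g y -> exists x, D (ginv g) x /\ phi g x = y) /\
  (forall g h y,
      (exists x, D (ginv g) x /\ D h x /\ phi g x = y) <-> (D g y /\ D (gmul g h) y)) /\
  (forall g h x, D (ginv h) x -> D (gmul (ginv h) (ginv g)) x ->
      phi g (phi h x) = phi (gmul g h) x).

Definition normal_subgroup (G : group) (H : G -> Prop) : Prop :=
  H gone /\
  (forall a b, H a -> H b -> H (gmul a b)) /\
  (forall a, H a -> H (ginv a)) /\
  (forall g a, H a -> H (gmul (gmul g a) (ginv g))).

Definition is_quotient (G : group) (H : G -> Prop) (Q : group) (pi : G -> Q) : Prop :=
  (forall a b, pi (gmul a b) = gmul (pi a) (pi b)) /\
  (forall q : Q, exists g, pi g = q) /\
  (forall g, pi g = gone <-> H g).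

(* If phi descends to G/H, then for h in H we get phi_h = psi_1 = id on X_{h^-1},
   and since phi_h maps X_{h^-1} into X_h (and likewise for h^-1) the two domains
   coincide.  Conversely, if H acts trivially then phi_k x = phi_k' x whenever
   kH = k'H and x lies in both domains: with m = k k'^-1 in H, axiom (ii) moves x
   along phi_k into X_m ∩ X_k, triviality of m puts phi_k x into X_{mk}, and (ii)
   again brings x into X_{k'^-1 k}, where (iii) splits phi_k' = phi_k phi_{k^-1 k'}.
   Choosing a representative then defines psi, and every axiom for psi is the
   corresponding axiom for phi read through the homomorphism G -> G/H. *)
From Stdlib Require Import ClassicalEpsilon.

Section GroupTheory.

Context {G : group}.
Implicit Types a b : G.

Lemma mulKg a b : gmul (ginv a) (gmul a b) = b.
Proof. rewrite gmulA, gmulVg; apply gmul1g. Qed.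

Lemma mulgV a : gmul a (ginv a) = gone.
Proof.
  assert (idem : gmul (gmul a (ginv a)) (gmul a (ginv a)) = gmul a (ginv a)).
  { rewrite <- gmulA, mulKg; reflexivity. }
  rewrite <- (mulKg (gmul a (ginv a)) (gmul a (ginv a))), idem.
  apply gmulVg.
Qed.

Lemma mulg1 a : gmul a gone = a.
Proof. rewrite <- (gmulVg G a), gmulA, mulgV; apply gmul1g. Qed.

Lemma mulVKg a b : gmul a (gmul (ginv a) b) = b.
Proof. rewrite gmulA, mulgV; apply gmul1g. Qed.

Lemma invgK a : ginv (ginv a) = a.
Proof. rewrite <- (mulg1 (ginv (ginv a))), <- (gmulVg G a); apply mulKg. Qed.

Lemma invMg a b : ginv (gmul a b) = gmul (ginv b) (ginv a).
Proof.
  rewrite <- (mulKg (gmul a b) (gmul (ginv b) (ginv a))), <- gmulA, (gmulA _ b),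
    mulgV, gmul1g, mulgV, mulg1.
  reflexivity.
Qed.

Lemma invg1 : ginv (@gone G) = gone.
Proof. rewrite <- (gmul1g G (ginv gone)); apply mulgV. Qed.

End GroupTheory.

Section Morphism.

Variables (G Q : group) (pi : G -> Q).
Hypothesis pi_morphM : forall a b, pi (gmul a b) = gmul (pi a) (pi b).

Lemma morph1 : pi gone = gone.
Proof.
  rewrite <- (mulKg (pi gone) (pi gone)), <- pi_morphM, gmul1g.
  apply gmulVg.
Qed.

Lemma morphV a : pi (ginv a) = ginv (pi a).
Proof.
  rewrite <- (mulg1 (pi (ginv a))), <- (mulgV (pi a)), gmulA, <- pi_morphM,
    gmulVg, morph1.
  apply gmul1g.
Qed.

Lemma morph_eq_mulV a b : pi a = pi b -> pi (gmul a (ginv b)) = gone.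
Proof. intros E; rewrite pi_morphM, morphV, E; apply mulgV. Qed.

Lemma morph_eq_Vmul a b : pi a = pi b -> pi (gmul (ginv a) b) = gone.
Proof. intros E; rewrite pi_morphM, morphV, E; apply gmulVg. Qed.

End Morphism.

Section PartialAction.

Variables (G : group) (X : Type) (D : G -> X -> Prop) (phi : G -> X -> X).
Hypothesis PA : is_partial_action G X D phi.

Lemma pa_dom1 x : D gone x.
Proof. apply PA. Qed.

Lemma pa_act1 x : phi gone x = x.
Proof. apply PA. Qed.

Lemma pa_act_dom g x : D (ginv g) x -> D g (phi g x).
Proof. apply PA. Qed.

Lemma pa_dom_mul g h y :
  (exists x, D (ginv g) x /\ D h x /\ phi g x = y) <-> (D g y /\ D (gmul g h) y).
Proof. apply PA. Qed.

Lemma pa_actM g h x :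
  D (ginv h) x -> D (gmul (ginv h) (ginv g)) x -> phi g (phi h x) = phi (gmul g h) x.
Proof. apply PA. Qed.

Lemma pa_act_dom_mul g h x : D (ginv g) x -> D h x -> D (gmul g h) (phi g x).
Proof. intros Dg Dh; apply (pa_dom_mul g h); exists x; auto. Qed.

Lemma pa_actK g x : D (ginv g) x -> phi (ginv g) (phi g x) = x.
Proof.
  intros Dx; rewrite pa_actM, gmulVg by (rewrite ?invgK, ?gmulVg; auto using pa_dom1).
  apply pa_act1.
Qed.

Lemma pa_actVK g x : D g x -> phi g (phi (ginv g) x) = x.
Proof. intros Dx; rewrite <- (invgK g) at 1; apply pa_actK; rewrite invgK; exact Dx. Qed.

Definition pa_trivial (h : G) : Prop :=
  (forall x, D h x <-> D (ginv h) x) /\ (forall x, D h x -> phi h x = x).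

Lemma pa_trivial_of_fix h :
  (forall x, D (ginv h) x -> phi h x = x) ->
  (forall x, D h x -> phi (ginv h) x = x) -> pa_trivial h.
Proof.
  intros fix_h fix_hV.
  assert (domV : forall x, D (ginv h) x -> D h x).
  { intros x Dx; rewrite <- (fix_h x Dx); apply pa_act_dom, Dx. }
  assert (dom : forall x, D h x -> D (ginv h) x).
  { intros x Dx; rewrite <- (fix_hV x Dx); apply pa_act_dom; rewrite invgK; exact Dx. }
  split; [split; auto | auto].
Qed.

Lemma pa_trivial_dom_mul m k y : pa_trivial m -> D m y -> D k y -> D (gmul m k) y.
Proof.
  intros [dom_m fix_m] Dm Dk.
  rewrite <- (fix_m y Dm); apply pa_act_dom_mul; [apply dom_m|]; assumption.
Qed.

Lemma pa_act_eq_trivial k k' x :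
  pa_trivial (gmul k (ginv k')) -> pa_trivial (gmul (ginv k) k') ->
  D (ginv k) x -> D (ginv k') x -> phi k x = phi k' x.
Proof.
  intros triv_m [dom_h fix_h] Dk Dk'.
  set (m := gmul k (ginv k')).
  assert (Dm : D m (phi k x)).
  { apply pa_act_dom_mul; assumption. }
  assert (Dmk : D (gmul m k) (phi k x)).
  { apply pa_trivial_dom_mul; [exact triv_m | exact Dm | apply pa_act_dom, Dk]. }
  assert (Dh : D (ginv (gmul (ginv k) k')) x).
  { rewrite <- (pa_actK k x Dk), invMg, invgK.
    replace (gmul (ginv k') k) with (gmul (ginv k) (gmul m k))
      by (unfold m; now rewrite <- gmulA, mulKg).
    apply pa_act_dom_mul; [rewrite invgK; apply pa_act_dom, Dk | exact Dmk]. }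
  rewrite <- (mulVKg k k'), <- pa_actM, fix_h; [reflexivity | apply dom_h; exact Dh
    | exact Dh | now rewrite <- invMg, mulVKg].
Qed.

End PartialAction.

Section InducedAction.

Variables (G : group) (X : Type) (D : G -> X -> Prop) (phi : G -> X -> X).
Variables (Q : group) (pi : G -> Q).
Hypothesis PA : is_partial_action G X D phi.
Hypothesis pi_morphM : forall a b, pi (gmul a b) = gmul (pi a) (pi b).

Definition induced_dom (q : Q) (x : X) : Prop := exists k, pi k = q /\ D k x.

(* Outside the domain of psi_q the chosen representative is junk; psi_q is only
   constrained on induced_dom (ginv q). *)
Definition induced_act (q : Q) (x : X) : X :=
  phi (epsilon (inhabits gone) (fun k => pi k = q /\ D (ginv k) x)) x.

Lemma induced_act_compat :
  (forall k k' x, pi k = pi k' -> D (ginv k) x -> D (ginv k') x -> phi k x = phi k' x) ->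
  forall k x, D (ginv k) x -> induced_act (pi k) x = phi k x.
Proof.
  intros act_eq k x Dx; unfold induced_act.
  destruct (epsilon_spec (inhabits gone) (fun k' => pi k' = pi k /\ D (ginv k') x))
    as [E Dx']; [exists k; auto|].
  apply act_eq; assumption.
Qed.

Lemma induced_domV q x :
  induced_dom (ginv q) x -> exists g, pi g = q /\ D (ginv g) x.
Proof.
  intros (k & E & Dx); exists (ginv k).
  rewrite morphV, E, !invgK by exact pi_morphM; auto.
Qed.

Variable psi : Q -> X -> X.
Hypothesis psi_compat : forall k x, D (ginv k) x -> psi (pi k) x = phi k x.

Lemma compat_act_eq k k' x :
  pi k = pi k' -> D (ginv k) x -> D (ginv k') x -> phi k x = phi k' x.
Proof. intros E Dk Dk'; rewrite <- psi_compat, E by assumption; auto. Qed.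

Lemma induced_act_inj q x y :
  induced_dom (ginv q) x -> induced_dom (ginv q) y -> psi q x = psi q y -> x = y.
Proof.
  intros Hx Hy Exy.
  destruct (induced_domV q x Hx) as (g & <- & Dx).
  destruct (induced_domV (pi g) y Hy) as (g' & E & Dy).
  rewrite psi_compat, <- E, psi_compat in Exy by assumption.
  rewrite <- (pa_actK _ _ _ _ PA g x Dx), <- (pa_actK _ _ _ _ PA g' y Dy), Exy.
  apply compat_act_eq.
  - rewrite !morphV, E by exact pi_morphM; reflexivity.
  - rewrite invgK, <- Exy; apply (pa_act_dom _ _ _ _ PA), Dx.
  - rewrite invgK; apply (pa_act_dom _ _ _ _ PA), Dy.
Qed.

Lemma induced_act_surj q y :
  induced_dom q y -> exists x, induced_dom (ginv q) x /\ psi q x = y.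
Proof.
  intros (k & <- & Dy).
  assert (Dx : D (ginv k) (phi (ginv k) y)).
  { apply (pa_act_dom _ _ _ _ PA); rewrite invgK; exact Dy. }
  exists (phi (ginv k) y); split.
  - exists (ginv k); split; [apply morphV, pi_morphM | exact Dx].
  - rewrite psi_compat by exact Dx; apply (pa_actVK _ _ _ _ PA), Dy.
Qed.

Lemma induced_dom_mul q r y :
  (exists x, induced_dom (ginv q) x /\ induced_dom r x /\ psi q x = y) <->
  (induced_dom q y /\ induced_dom (gmul q r) y).
Proof.
  split.
  - intros (x & Hx & (k & <- & Dk) & <-).
    destruct (induced_domV q x Hx) as (g & <- & Dg).
    rewrite psi_compat by exact Dg.
    split; [exists g | exists (gmul g k)]; split; auto.
    apply (pa_act_dom _ _ _ _ PA), Dg.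
    apply (pa_act_dom_mul _ _ _ _ PA); assumption.
  - intros [(k & <- & Dk) (k' & E & Dk')].
    destruct (proj2 (pa_dom_mul _ _ _ _ PA k (gmul (ginv k) k') y))
      as (x & Dx & Dx' & <-); [rewrite mulVKg; auto|].
    exists x; split; [|split].
    + exists (ginv k); split; [apply morphV, pi_morphM | exact Dx].
    + exists (gmul (ginv k) k'); split; [|exact Dx'].
      rewrite pi_morphM, E, morphV, mulKg by exact pi_morphM; reflexivity.
    + apply psi_compat, Dx.
Qed.

Lemma induced_actM q r x :
  induced_dom (ginv r) x -> induced_dom (gmul (ginv r) (ginv q)) x ->
  psi q (psi r x) = psi (gmul q r) x.
Proof.
  intros Hx (k & Ek & Dk).
  destruct (induced_domV r x Hx) as (h & <- & Dh).
  assert (Eq : q = pi (gmul (ginv k) (ginv h))).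
  { rewrite pi_morphM, !morphV, Ek, invMg, !invgK, <- gmulA, mulgV, mulg1
      by exact pi_morphM.
    reflexivity. }
  assert (Dkh : D (ginv (gmul (ginv k) (ginv h))) (phi h x)).
  { rewrite invMg, !invgK; apply (pa_act_dom_mul _ _ _ _ PA); assumption. }
  rewrite Eq, <- pi_morphM, (psi_compat h x Dh), (psi_compat _ _ Dkh), psi_compat.
  - apply (pa_actM _ _ _ _ PA); [exact Dh | now rewrite invMg, !invgK, mulKg].
  - now rewrite <- gmulA, gmulVg, mulg1, invgK.
Qed.

Lemma induced_is_partial_action : is_partial_action Q X induced_dom psi.
Proof.
  split; [|split; [|split; [|split; [|split; [|split]]]]].
  - intros x; exists gone; split; [apply morph1, pi_morphM | apply (pa_dom1 _ _ _ _ PA)].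
  - intros x; rewrite <- (morph1 _ _ pi pi_morphM), psi_compat;
      [apply (pa_act1 _ _ _ _ PA) | rewrite invg1; apply (pa_dom1 _ _ _ _ PA)].
  - intros q x Hx; destruct (induced_domV q x Hx) as (g & <- & Dx).
    exists g; split; [reflexivity|]; rewrite psi_compat by exact Dx.
    apply (pa_act_dom _ _ _ _ PA), Dx.
  - exact induced_act_inj.
  - exact induced_act_surj.
  - exact induced_dom_mul.
  - exact induced_actM.
Qed.

End InducedAction.

Section KernelTrivial.

Variables (G : group) (X : Type) (D : G -> X -> Prop) (phi : G -> X -> X).
Variables (Q : group) (pi : G -> Q) (psi : Q -> X -> X).
Hypothesis PA : is_partial_action G X D phi.
Hypothesis pi_morphM : forall a b, pi (gmul a b) = gmul (pi a) (pi b).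
Hypothesis psi_act1 : forall x, psi gone x = x.
Hypothesis psi_compat : forall k x, D (ginv k) x -> psi (pi k) x = phi k x.

Lemma kernel_pa_trivial h : pi h = gone -> pa_trivial G X D phi h.
Proof.
  intros Eh; apply (pa_trivial_of_fix _ _ _ _ PA).
  - intros x Dx; rewrite <- psi_compat, Eh by exact Dx; apply psi_act1.
  - intros x Dx; rewrite <- psi_compat, morphV, Eh, invg1 by (rewrite ?invgK; assumption).
    apply psi_act1.
Qed.

End KernelTrivial.

Theorem mainTheorem3 (G : group) (X : Type) (D : G -> X -> Prop) (phi : G -> X -> X)
    (H : G -> Prop) (Q : group) (pi : G -> Q) :
  is_partial_action G X D phi ->
  normal_subgroup G H ->
  is_quotient G H Q pi ->
  ((exists psi : Q -> X -> X,
      is_partial_action Q X (fun (q : Q) (x : X) => exists k : G, pi k = q /\ D k x) psi /\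
      (forall (k : G) (x : X), D (ginv k) x -> psi (pi k) x = phi k x))
   <->
   (forall h : G, H h ->
      (forall x, D h x <-> D (ginv h) x) /\ (forall x, D h x -> phi h x = x))).
Proof.
  intros PA _ (pi_morphM & _ & kerH).
  split.
  - intros (psi & PApsi & psi_compat) h Hh.
    apply (kernel_pa_trivial G X D phi Q pi psi PA pi_morphM);
      [apply PApsi | exact psi_compat | apply kerH, Hh].
  - intros trivH.
    assert (act_eq : forall k k' x, pi k = pi k' ->
              D (ginv k) x -> D (ginv k') x -> phi k x = phi k' x).
    { intros k k' x E; apply (pa_act_eq_trivial _ _ _ _ PA); apply trivH, kerH;
        [apply morph_eq_mulV | apply morph_eq_Vmul]; assumption. }
    pose proof (induced_act_compat G X D phi Q pi act_eq) as compat.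
    exists (induced_act G X D phi Q pi); split; [|exact compat].
    exact (induced_is_partial_action G X D phi Q pi PA pi_morphM _ compat).
Qed.
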